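(* Let $\mathbb{F}\in\{\mathbb{R},\mathbb{C}\}$ and let $M$ be the $n\times n$ companion matrix of a monic polynomial $f(x)=x^n+a_1x^{n-1}+\cdots+a_n\in\mathbb{F}[x]$. Then there is a tensor $(O;N)$ over $\mathbb{F}$ of rank at most $1$ such that $(E_n;M)-(O;N)$ is diagonalizable over $\mathbb{F}$. In particular $\mathrm{rank}_{\mathbb{F}}(E_n;M)\le n+1$.
   Context: The companion matrix of $f(x)=x^n+a_1x^{n-1}+\cdots+a_{n-1}x+a_n$ is the $n\times n$ matrix with ones on the subdiagonal (entries $(i+1,i)$), last column $(-a_n,-a_{n-1},\dots,-a_1)^T$, and zeros elsewhere. For matrices $A,B$ of the same size $m\times n$, $(A;B)$ denotes the $m\times n\times 2$ tensor with slices $A,B$; tensors are added slicewise. A rank-one $m\times n\times 2$ tensor over $\mathbb{F}$ has the form $(\alpha\,\mathbf{a}\mathbf{b}^T;\beta\,\mathbf{a}\mathbf{b}^T)$ with nonzero $\mathbf{a},\mathbf{b}$ and $(\alpha,\beta)\neq 0$; $\mathrm{rank}_{\mathbb{F}}(T)$ is the minimal number of rank-one tensors summing to $T$. $E_n$ is the identity matrix. An $m\times n\times 2$ tensor $(A;B)$ is diagonalizable over $\mathbb{F}$ if there are nonsingular $P,Q$ over $\mathbb{F}$ and diagonal $D_A,D_B$ with $PAQ=(D_A,O)$, $PBQ=(D_B,O)$ if $m\le n$, and $PAQ=(D_A,O)^T$, $PBQ=(D_B,O)^T$ if $m>n$. *)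

From HB Require Import structures.
From mathcomp Require Import all_boot all_order all_algebra.
Set Implicit Arguments. Unset Strict Implicit. Unset Printing Implicit Defensive.
Import GRing.Theory Num.Theory.
Local Open Scope ring_scope.

(* Companion matrix (paper's convention) of the monic polynomial
   f = x^n + a_1 x^(n-1) + ... + a_n, i.e. a_k = f`_(n-k):
   ones on the subdiagonal (entries (i+1,i)), last column
   (-a_n, ..., -a_1)^T = (-f`_0, ..., -f`_(n-1))^T, zeros elsewhere. *)
Definition companion (F : nzRingType) (n : nat) (f : {poly F}) : 'M[F]_n :=
  \matrix_(i < n, j < n)
    if (j == n.-1 :> nat) then - f`_i else ((i : nat) == j.+1)%:R.

(* An m x n x 2 tensor (A;B) is a pair of m x n matrices. *)
Definition tensor (F : nzRingType) (m n : nat) := ('M[F]_(m, n) * 'M[F]_(m, n))%type.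

Definition tadd (F : nzRingType) m n (T U : tensor F m n) : tensor F m n :=
  (T.1 + U.1, T.2 + U.2).

Definition tsub (F : nzRingType) m n (T U : tensor F m n) : tensor F m n :=
  (T.1 - U.1, T.2 - U.2).

Definition tzero (F : nzRingType) m n : tensor F m n := (0, 0).

Definition rank_one (F : nzRingType) m n (T : tensor F m n) : Prop :=
  exists (alpha beta : F) (a : 'cV[F]_m) (b : 'cV[F]_n),
    [/\ a != 0, b != 0, (alpha != 0) || (beta != 0) &
        T = (alpha *: (a *m b^T), beta *: (a *m b^T))].

Definition tensor_rank_le (F : nzRingType) m n (T : tensor F m n) (r : nat) : Prop :=
  exists s : seq (tensor F m n),
    [/\ (size s <= r)%N, (forall U, U \in s -> rank_one U) &
        T = foldr (@tadd F m n) (tzero F m n) s].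

(* Diagonalizable m x n x 2 tensor: nonsingular P, Q with P A Q and P B Q of the
   form (D,O) resp. (D,O)^T with D diagonal, i.e. all entries (i,j) with
   i <> j vanish. *)
Definition tensor_diagonalizable (F : fieldType) m n (T : tensor F m n) : Prop :=
  exists (P : 'M[F]_m) (Q : 'M[F]_n),
    [/\ P \in unitmx, Q \in unitmx,
        (forall (i : 'I_m) (j : 'I_n), (i : nat) != j -> (P *m T.1 *m Q) i j = 0) &
        (forall (i : 'I_m) (j : 'I_n), (i : nat) != j -> (P *m T.2 *m Q) i j = 0)].

From HB Require Import structures.
From mathcomp Require Import all_boot all_order all_algebra.
Set Implicit Arguments. Unset Strict Implicit. Unset Printing Implicit Defensive.
Import GRing.Theory Num.Theory.
Local Open Scope ring_scope.

(* Fix n distinct scalars lam_0, ..., lam_(n-1) (over a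
   number field take lam_k = k) and let g = prod_k (X - lam_k).  The
   Vandermonde-type matrix V with rows (1, lam_k, ..., lam_k^(n-1)) is
   invertible, and each of its rows is a left eigenvector of the companion
   matrix C_g, so V C_g V^-1 = diag(lam).  For any polynomial f (monic or not),
   C_f and C_g differ only in their last column, so N := C_f - C_g is an outer
   product a e_(n-1)^T and (O;N) has rank at most 1.  Then
   V ((E;C_f) - (O;N)) V^-1 = (E;diag(lam)) is diagonal, and
   (E;C_f) = (E;C_g) + (O;N) where (E;C_g) = sum_k (w_k v_k^T; lam_k w_k v_k^T)
   (w_k, v_k the k-th column of V^-1 and row of V) has rank at most n. *)

Section TensorRank.
Variables (F : nzRingType) (m n : nat).

Lemma tsum_cat (s1 s2 : seq (tensor F m n)) :
  foldr (@tadd F m n) (tzero F m n) (s1 ++ s2) =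
  tadd (foldr (@tadd F m n) (tzero F m n) s1)
       (foldr (@tadd F m n) (tzero F m n) s2).
Proof.
elim: s1 => [|T s1 IH] /=; first by rewrite /tadd /= !add0r; case: (foldr _ _ _).
by rewrite IH /tadd /= !addrA.
Qed.

Lemma tsum_map (I : Type) (h : I -> tensor F m n) (r : seq I) :
  foldr (@tadd F m n) (tzero F m n) (map h r) =
  (\sum_(k <- r) (h k).1, \sum_(k <- r) (h k).2).
Proof. by elim: r => [|k r IH] /=; rewrite ?big_nil // IH !big_cons. Qed.

Lemma tensor_rank_le_add (T U : tensor F m n) (r s : nat) :
  tensor_rank_le T r -> tensor_rank_le U s -> tensor_rank_le (tadd T U) (r + s).
Proof.
move=> [sT [sizeT oneT ->]] [sU [sizeU oneU ->]].
exists (sT ++ sU); split; first by rewrite size_cat leq_add.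
  by move=> V; rewrite mem_cat => /orP[/oneT | /oneU].
by rewrite tsum_cat.
Qed.

Lemma tensor_rank_le_outer (a : 'cV[F]_m) (b : 'cV[F]_n) :
  tensor_rank_le (0, a *m b^T) 1.
Proof.
have [->|a0] := eqVneq a 0; first by exists [::]; rewrite mul0mx.
have [->|b0] := eqVneq b 0; first by exists [::]; rewrite trmx0 mulmx0.
exists [:: (0 *: (a *m b^T), 1 *: (a *m b^T))]; split=> //=.
  move=> U; rewrite inE => /eqP ->.
  by exists 0, 1, a, b; rewrite oner_neq0 orbT.
by rewrite /tadd /= scale0r scale1r !addr0.
Qed.

End TensorRank.

Section Companion.
Variables (F : comNzRingType) (n : nat) (g : {poly F}).
Hypotheses (g_monic : g \is monic) (size_g : size g = n.+1).

Lemma powers_companion (x : F) : root g x ->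
  (\row_(i < n) x ^+ i) *m companion n g = x *: \row_(i < n) x ^+ i.
Proof.
move=> /eqP gx0; apply/rowP => j; rewrite !mxE.
under eq_bigr do rewrite !mxE.
have [jlast|jnlast] := eqVneq (j : nat) n.-1.
  have n_gt0 : (0 < n)%N by apply: leq_ltn_trans (ltn_ord j).
  have gn1 : g`_n = 1 by move: g_monic; rewrite monicE /lead_coef size_g => /eqP.
  (* x^n = - sum_(i < n) g_i x^i since g(x) = 0 *)
  move: gx0; rewrite horner_coef size_g big_ord_recr /= gn1 mul1r => /eqP.
  rewrite addr_eq0 => /eqP xn; rewrite jlast -exprS (prednK n_gt0) -[_ ^+ n]opprK -xn.
  by rewrite -sumrN; apply: eq_bigr => i _; rewrite mulrN mulrC.
have j1_lt : (j.+1 < n)%N.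
  by rewrite ltn_neqAle ltn_ord andbT; apply: contra jnlast => /eqP/(congr1 predn)/= ->.
rewrite (bigD1 (Ordinal j1_lt)) //= eqxx mulr1 big1 ?addr0 ?exprS // => i ij1.
by rewrite (_ : (i == j.+1 :> nat) = false) ?mulr0 //; apply: negbTE.
Qed.

Lemma powers_mx_companion (lam : 'I_n -> F) : (forall k, root g (lam k)) ->
  (\matrix_(k < n, i < n) lam k ^+ i) *m companion n g =
  diag_mx (\row_k lam k) *m \matrix_(k < n, i < n) lam k ^+ i.
Proof.
move=> roots; rewrite mul_diag_mx; apply/row_matrixP => k; rewrite row_mul.
have rowk : row k (\matrix_(k < n, i < n) lam k ^+ i) = \row_(i < n) lam k ^+ i.
  by apply/rowP => i; rewrite !mxE.
by rewrite rowk powers_companion //; apply/rowP => i; rewrite !mxE.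
Qed.

End Companion.

Lemma companion_sub (F : nzRingType) (n : nat) (f g : {poly F}) :
  companion n f - companion n g =
  (\col_i (g`_i - f`_i)) *m (\col_(j < n) ((j : nat) == n.-1)%:R)^T.
Proof.
apply/matrixP => i j; rewrite !mxE big_ord1 !mxE.
by case: eqP => _; rewrite ?mulr1 ?mulr0 ?subrr // opprK addrC.
Qed.

Section Diagonalization.
Variables (F : fieldType) (n : nat).

Lemma mulmx_sum_outer (A B : 'M[F]_n) : A *m B = \sum_k col k A *m row k B.
Proof.
apply/matrixP => i j; rewrite summxE mxE; apply: eq_bigr => k _.
by rewrite mxE big_ord1 !mxE.
Qed.

Lemma unitmx_row_neq0 (A : 'M[F]_n) (k : 'I_n) : A \in unitmx -> row k A != 0.
Proof.
move=> Au; apply: contraTneq isT => rowk0.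
have := congr1 (row k) (mulmxV Au); rewrite row_mul rowk0 mul0mx.
move/rowP/(_ k); rewrite !mxE eqxx => /eqP; by rewrite eq_sym oner_eq0.
Qed.

(* A pencil (E; W diag(d) V) with W = V^-1 is a sum of the n rank-one
   tensors (w_k v_k; d_k w_k v_k), hence has rank at most n. *)
Lemma tensor_rank_le_diagonal (V : 'M[F]_n) (d : 'rV[F]_n) : V \in unitmx ->
  tensor_rank_le (1%:M, invmx V *m diag_mx d *m V) n.
Proof.
move=> Vu; set W := invmx V; set E := fun k => col k W *m row k V.
exists [seq (1 *: E k, d 0 k *: E k) | k <- index_enum 'I_n]; split.
- by rewrite size_map /index_enum -enumT -cardE card_ord.
- move=> U /mapP[k _ ->]; exists 1, (d 0 k), (col k W), (row k V)^T.
  rewrite trmxK oner_neq0; split=> //; last by rewrite trmx_eq0 unitmx_row_neq0.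
  by rewrite -[W]trmxK -tr_row trmx_eq0 unitmx_row_neq0 // unitmx_tr unitmx_inv.
- rewrite tsum_map /=; congr pair.
    by rewrite -(mulVmx Vu) mulmx_sum_outer; apply: eq_bigr => k _; rewrite scale1r.
  rewrite mulmx_sum_outer; apply: eq_bigr => k _; apply/matrixP => i j.
  by rewrite mul_mx_diag !mxE !big_ord1 !mxE mulrCA mulrA.
Qed.

Variable lam : 'I_n -> F.
Hypothesis lam_inj : injective lam.

Definition node_poly : {poly F} := \prod_(k < n) ('X - (lam k)%:P).
Definition node_mx : 'M[F]_n := \matrix_(k < n, i < n) lam k ^+ i.

Lemma node_poly_monic : node_poly \is monic.
Proof. exact: monic_prod_XsubC. Qed.

Lemma size_node_poly : size node_poly = n.+1.
Proof. by rewrite size_prod_XsubC /index_enum -enumT -cardE card_ord. Qed.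

Lemma node_poly_root k : root node_poly (lam k).
Proof. by rewrite rootE /node_poly horner_prod (bigD1 k) //= !hornerE subrr mul0r. Qed.

Lemma node_mx_unit : node_mx \in unitmx.
Proof.
have -> : node_mx = (Vandermonde n (\row_k lam k))^T.
  by apply/matrixP => i j; rewrite !mxE.
rewrite unitmxE det_tr det_Vandermonde unitfE; apply/prodf_neq0 => i _.
apply/prodf_neq0 => j ij; rewrite !mxE subr_eq0; apply: contraTneq ij.
by move/lam_inj => ->; rewrite ltnn.
Qed.

Lemma node_mx_companion :
  node_mx *m companion n node_poly *m invmx node_mx = diag_mx (\row_k lam k).
Proof.
rewrite (powers_mx_companion node_poly_monic size_node_poly node_poly_root).
by rewrite -mulmxA mulmxV ?mulmx1 // node_mx_unit.
Qed.

End Diagonalization.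

Theorem mainTheorem2 (F : numFieldType) (n : nat) (f : {poly F}) :
  f \is monic -> size f = n.+1 ->
  (exists N : 'M[F]_n,
     tensor_rank_le ((0 : 'M[F]_n), N) 1 /\
     tensor_diagonalizable (tsub ((1%:M : 'M[F]_n), companion n f) (0, N)))
  /\ tensor_rank_le ((1%:M : 'M[F]_n), companion n f) n.+1.
Proof.
move=> _ _.
pose lam (k : 'I_n) : F := (k : nat)%:R.
have lam_inj : injective lam by move=> i j /eqP; rewrite eqr_nat => /eqP/val_inj.
set g := node_poly lam; set V := node_mx lam; set N := companion n f - companion n g.
have Vu : V \in unitmx := node_mx_unit lam_inj.
have rankN : tensor_rank_le ((0 : 'M[F]_n), N) 1.
  by rewrite /N companion_sub; apply: tensor_rank_le_outer.
have CfN : companion n f - N = companion n g by rewrite opprB addrC subrK.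
split.
  exists N; split=> //; exists V, (invmx V); split; rewrite ?unitmx_inv //=.
    by move=> i j /negbTE ij; rewrite subr0 mulmx1 mulmxV // mxE [i == j]ij.
  by move=> i j /negbTE ij; rewrite CfN node_mx_companion // mxE [i == j]ij mulr0n.
have -> : ((1%:M : 'M[F]_n), companion n f) =
          tadd (1%:M, invmx V *m diag_mx (\row_k lam k) *m V) (0, N).
  rewrite /tadd /= addr0 -(node_mx_companion lam_inj) !mulmxA mulVmx // mul1mx.
  by rewrite -mulmxA mulVmx // mulmx1 /N addrC subrK.
by rewrite -[n.+1]addn1; apply: tensor_rank_le_add => //; apply: tensor_rank_le_diagonal.
Qed.
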